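(* Let $z\ge 1$, $r\ge 1$ and $g\ge 3$ be integers. Then there exists a $[z,r;g]$-mixed graph.
   Context: A mixed graph is a finite graph that may contain both (undirected) edges and (directed) arcs. A $[z,r;g]$-mixed graph is a mixed graph in which every vertex is the tail of exactly $z$ arcs, the head of exactly $z$ arcs, and is incident with exactly $r$ edges, and whose girth is $g$. Walks are sequences $(v_0,\dots,v_n)$ where for each $i$, $v_iv_{i+1}$ is an edge or $(v_i,v_{i+1})$ is an arc (arcs may only be traversed in their direction, edges in either direction); a cycle is a closed such walk with no repeated vertex other than $v_0=v_n$ and no edge or arc used twice; the girth is the length of a shortest cycle. *)

From mathcomp Require Import all_boot.
Set Implicit Arguments. Unset Strict Implicit. Unset Printing Implicit Defensive.

Record mixed_graph (V : finType) := MixedGraph {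
  medge : rel V;
  marc : rel V;
  medge_sym : symmetric medge;
  medge_irr : irreflexive medge;
  marc_irr : irreflexive marc }.

Definition step_ok (V : finType) (G : mixed_graph V) (b : bool) (x y : V) : bool :=
  if b then marc G x y else medge G x y.

Definition same_item (V : finType) (b : bool) (x y : V) (b' : bool) (x' y' : V) : bool :=
  (b == b') &&
  (if b then (x == x') && (y == y')
   else ((x == x') && (y == y')) || ((x == y') && (y == x'))).

Definition is_cycle (V : finType) (G : mixed_graph V) (n : nat)
    (f : 'I_n -> V) (k : 'I_n -> bool) : Prop :=
  0 < n /\ injective f /\
  (forall i : 'I_n, step_ok G (k i) (f i) (f (ordS i))) /\
  (forall i j : 'I_n, i != j ->
     ~~ same_item (k i) (f i) (f (ordS i)) (k j) (f j) (f (ordS j))).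

Definition has_cycle_of_length (V : finType) (G : mixed_graph V) (n : nat) : Prop :=
  exists (f : 'I_n -> V) (k : 'I_n -> bool), is_cycle G f k.

Definition girth_is (V : finType) (G : mixed_graph V) (g : nat) : Prop :=
  has_cycle_of_length G g /\ (forall n, n < g -> ~ has_cycle_of_length G n).

Definition is_zrg_mixed_graph (V : finType) (G : mixed_graph V) (z r g : nat) : Prop :=
  (forall x : V,
     #|[set y | marc G x y]| = z /\
     #|[set y | marc G y x]| = z /\
     #|[set y | medge G x y]| = r) /\
  girth_is G g.

From mathcomp Require Import all_boot fingroup perm.
Set Implicit Arguments. Unset Strict Implicit. Unset Printing Implicit Defensive.

(* Vertices are triples (layer, copy, group element) with layers in Z/g; arcs go
   from every vertex of a layer to every copy of the same group element in the
   next layer, and edges form, inside each (layer, copy), the Cayley graph of a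
   group generated by r involutions.  A short cycle cannot use arcs (it would
   have to wind around all g layers), so it is a closed non-backtracking walk
   in the Cayley graph, i.e. a reduced word of length < g equal to 1.  The
   generators are chosen as "toggle the letter a" acting on reduced words of
   length at most g, where reduced words of length < g act freely on the empty
   word; the g-cycles are the directed ones through all layers. *)

Definition non_backtracking r (l : nat -> 'I_r) (n : nat) : Prop :=
  forall t, t.+1 < n -> l t != l t.+1.

Section ReducedWords.

Variables (L r : nat).

Definition reduced (w : seq 'I_r) : bool := sorted (fun a b => a != b) w.

(* Cancel a leading [a], else prepend [a] if there is room; non-reduced words
   are fixed, which is what makes [toggle a] an involution. *)
Definition toggle (a : 'I_r) (w : seq 'I_r) : seq 'I_r :=
  if reduced w then
    if ohead w == Some a then behead w
    else if size w < L then a :: w else w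
  else w.

Lemma reduced_cons a w : reduced (a :: w) = (ohead w != Some a) && reduced w.
Proof. by case: w => //= b w; rewrite eq_sym. Qed.

Lemma size_toggle a w : size w <= L -> size (toggle a w) <= L.
Proof.
rewrite /toggle => hw; case: ifP => // _.
case: ifP => [_|_]; first by case: w hw => //= b w /ltnW.
by case: ifP.
Qed.

Lemma toggle_cons a w : reduced (a :: w) -> size w < L -> toggle a w = a :: w.
Proof. by rewrite reduced_cons /toggle => /andP[/negPf-> ->] ->. Qed.

Lemma toggle_head a w : reduced (a :: w) -> toggle a (a :: w) = w.
Proof. by rewrite /toggle => ->; rewrite /= eqxx. Qed.

Lemma toggleK a w : size w <= L -> toggle a (toggle a w) = w.
Proof.
move=> hw; rewrite {2}/toggle; case rw: (reduced w); last by rewrite /toggle rw.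
case: (eqVneq (ohead w) (Some a)) => [ha|ha].
  case: w ha rw hw => //= b u [->] rw hw.
  by rewrite toggle_cons.
case: ifP => hs; last by rewrite /toggle rw (negPf ha) hs.
by rewrite toggle_head // reduced_cons ha.
Qed.

Lemma reduced_rev_mkseq (l : nat -> 'I_r) n :
  non_backtracking l n -> reduced (rev (mkseq l n)).
Proof.
elim: n => [|[|n] IH] hl //.
rewrite mkseqS rev_rcons mkseqS rev_rcons.
rewrite [reduced _]/= eq_sym hl //=.
have := IH (fun t ht => hl t (ltnW ht)).
by rewrite mkseqS rev_rcons.
Qed.

End ReducedWords.

Section ToggleGroup.

Variables (L r : nat).

Definition toggle_bseq (a : 'I_r) (w : L.-bseq 'I_r) : L.-bseq 'I_r :=
  Bseq (size_toggle a (size_bseq w)).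

Lemma toggle_bseqK a : involutive (toggle_bseq a).
Proof. by move=> w; apply: val_inj; apply: toggleK (size_bseq w). Qed.

Definition toggle_perm (a : 'I_r) : {perm L.-bseq 'I_r} :=
  perm (inv_inj (toggle_bseqK a)).

Lemma toggle_permE a w : val (toggle_perm a w) = toggle L a (val w).
Proof. by rewrite permE. Qed.

Lemma toggle_perm_invol a : (toggle_perm a * toggle_perm a = 1)%g.
Proof. by apply/permP => w; rewrite permM perm1 !permE toggle_bseqK. Qed.

Lemma prod_toggle_perm_nil (l : nat -> 'I_r) n : n <= L -> non_backtracking l n ->
  val ((\prod_(t < n) toggle_perm (l t))%g [bseq]) = rev (mkseq l n).
Proof.
elim: n => [|n IH] hn hl; first by rewrite big_ord0 perm1.
have hl' : non_backtracking l n by move=> t ht; apply: hl; apply: ltnW.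
rewrite big_ord_recr /= permM toggle_permE IH ?(ltnW hn) // mkseqS rev_rcons.
rewrite toggle_cons ?size_rev ?size_mkseq //.
by rewrite -rev_rcons -mkseqS reduced_rev_mkseq.
Qed.

Lemma toggle_perm_free (l : nat -> 'I_r) n : 0 < n <= L -> non_backtracking l n ->
  (\prod_(t < n) toggle_perm (l t) != 1)%g.
Proof.
case/andP=> n0 nL hl; apply/eqP => e.
have := prod_toggle_perm_nil nL hl; rewrite e perm1 /= => /(congr1 size).
by rewrite size_rev size_mkseq => n_eq0; rewrite -n_eq0 in n0.
Qed.

End ToggleGroup.

Lemma val_iter_ordS n t : val (iter t (@ordS n.+1) ord0) = t %% n.+1.
Proof. by elim: t => //= t ->; rewrite -[(_ %% _).+1]addn1 modnDml addn1. Qed.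

Section LayeredCayleyGraph.

Variables (gT : finGroupType) (g z r : nat) (s : 'I_r -> gT).
Hypothesis g_gt2 : 2 < g.
Hypothesis s_invol : forall a, (s a * s a = 1)%g.
Hypothesis s_free : forall (l : nat -> 'I_r) n, 0 < n < g -> non_backtracking l n ->
  (\prod_(t < n) s (l t) != 1)%g.

Definition vertex := ('I_g * 'I_z * gT)%type.

Definition cayley_edge : rel vertex :=
  fun x y => (x.1 == y.1) && [exists a, y.2 == (x.2 * s a)%g].

Definition layer_arc : rel vertex :=
  fun x y => (y.1.1 == ordS x.1.1) && (y.2 == x.2).

Lemma gen_neq1 a : (s a != 1)%g.
Proof.
have := @s_free (fun=> a) 1 (ltn_trans (ltnSn 1) g_gt2); rewrite big_ord1.
by apply; case.
Qed.

Lemma gen_inj : injective s.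
Proof.
move=> a b eab; apply/eqP/negPn/negP => nab.
pose l t := if t is 0 then a else b.
have nb : non_backtracking l 2 by case=> [|[]] // _.
have := @s_free l 2 g_gt2 nb.
by rewrite big_ord_recr big_ord1 /= -eab s_invol eqxx.
Qed.

Lemma cayley_edge_sym : symmetric cayley_edge.
Proof.
suff imp x y : cayley_edge x y -> cayley_edge y x.
  by move=> x y; apply/idP/idP; apply: imp.
case/andP=> /eqP e /existsP[a /eqP ha]; rewrite /cayley_edge e eqxx.
by apply/existsP; exists a; rewrite ha -mulgA s_invol mulg1.
Qed.

Lemma cayley_edge_irr : irreflexive cayley_edge.
Proof.
move=> x; apply/negP => /andP[_ /existsP[a /eqP]].
by rewrite -{1}[x.2]mulg1 => /mulgI/esym/eqP; rewrite (negPf (gen_neq1 a)).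
Qed.

Lemma layer_arc_irr : irreflexive layer_arc.
Proof.
move=> x; apply/negP => /andP[/eqP/(congr1 val) /= h _].
have g_gt1 : 1 < g by apply: ltnW.
case: x.1.1 h => i /=; rewrite leq_eqVlt => /orP[/eqP ig | ig].
  by rewrite ig modnn => i0; move: g_gt1; rewrite -ig i0.
by rewrite modn_small // => /n_Sn.
Qed.

Definition layered_cayley : mixed_graph vertex :=
  MixedGraph cayley_edge_sym cayley_edge_irr layer_arc_irr.

Lemma card_out_arcs x : #|[set y | layer_arc x y]| = z.
Proof.
have -> : [set y | layer_arc x y] = [set (ordS x.1.1, c, x.2) | c : 'I_z].
  apply/setP => -[[i c] p]; rewrite inE; apply/idP/imsetP.
    by case/andP => /= /eqP-> /eqP->; exists c.
  by case=> d _ [-> -> ->]; rewrite /layer_arc !eqxx.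
by rewrite card_imset ?card_ord // => c d [].
Qed.

Lemma card_in_arcs x : #|[set y | layer_arc y x]| = z.
Proof.
have -> : [set y | layer_arc y x] = [set (ord_pred x.1.1, c, x.2) | c : 'I_z].
  apply/setP => -[[i c] p]; rewrite inE; apply/idP/imsetP.
    by case/andP => /= /eqP-> /eqP->; exists c; rewrite ?ordSK.
  by case=> d _ [-> -> ->]; rewrite /layer_arc /= ord_predK !eqxx.
by rewrite card_imset ?card_ord // => c d [].
Qed.

Lemma card_edges x : #|[set y | cayley_edge x y]| = r.
Proof.
have -> : [set y | cayley_edge x y] = [set (x.1, (x.2 * s a)%g) | a : 'I_r].
  apply/setP => -[l p]; rewrite inE; apply/idP/imsetP.
    by case/andP => /= /eqP<- /existsP[a /eqP->]; exists a.
  by case=> a _ [-> ->]; rewrite /cayley_edge eqxx /=; apply/existsP; exists a.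
by rewrite card_imset ?card_ord // => a b [] /mulgI/gen_inj.
Qed.

Lemma layered_cayley_has_g_cycle (c : 'I_z) : has_cycle_of_length layered_cayley g.
Proof.
exists (fun i => (i, c, 1%g)), (fun=> true); split; first exact: ltnW (ltnW g_gt2).
split; first by move=> i j [].
split; first by move=> i; rewrite /step_ok /= /layer_arc !eqxx.
by move=> i j ij; rewrite /same_item /= !xpair_eqE (negPf ij).
Qed.

Lemma step_layer b x y : step_ok layered_cayley b x y ->
  val y.1.1 = (val x.1.1 + b) %% g.
Proof.
case: b => /andP[/eqP e _]; first by rewrite e addn1.
by rewrite -e /= addn0 modn_small.
Qed.

(* Summing [step_layer] around the cycle, the number of arcs is 0 mod g. *)
Lemma short_cycle_no_arc n (f : 'I_n -> vertex) k :
  is_cycle layered_cayley f k -> n < g -> forall i, k i = false.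
Proof.
case=> _ [_ [hstep _]] ng.
pose layers := \sum_i val (f i).1.1.
have hsum : layers + \sum_i (k i : nat) = layers + 0 %[mod g].
  rewrite addn0 -big_split /= /layers [in RHS](reindex_inj (@ordS_inj n)) /=.
  by rewrite (eq_bigr _ (fun i _ => step_layer (hstep i))) modn_summ.
have arcs_lt : \sum_i (k i : nat) < g.
  apply: leq_ltn_trans ng; rewrite -[n in _ <= n]card_ord -sum1_card.
  by apply: leq_sum => i _; apply: leq_b1.
move/eqP: hsum; rewrite eqn_modDl mod0n modn_small // sum_nat_eq0 => /forallP hk i.
by move: (hk i); case: (k i).
Qed.

Lemma prod_walk (p : nat -> gT) (l : nat -> 'I_r) n :
  (forall t, t < n -> p t.+1 = (p t * s (l t))%g) ->
  p n = (p 0 * \prod_(t < n) s (l t))%g.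
Proof.
elim: n => [|n IH] hp; first by rewrite big_ord0 mulg1.
by rewrite big_ord_recr mulgA -IH ?hp // => t /ltnW; apply: hp.
Qed.

Lemma no_short_cycle n : n < g -> ~ has_cycle_of_length layered_cayley n.
Proof.
move=> ng [f [k cyc]]; have k0 := short_cycle_no_arc cyc ng.
case: cyc => n0 [_ [hstep hdist]].
case: n ng f k n0 k0 hstep hdist => // m ng f k _ k0 hstep hdist.
have hedge i : cayley_edge (f i) (f (ordS i)) by move: (hstep i); rewrite k0.
have hfst i : (f (ordS i)).1 = (f i).1 by case/andP: (hedge i) => /eqP.
have lab_spec i : {a | (f (ordS i)).2 = ((f i).2 * s a)%g}.
  have /sigW[a /eqP ha] : exists a, (f (ordS i)).2 == ((f i).2 * s a)%g.
    by case/andP: (hedge i) => _ /existsP.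
  by exists a.
have [lab hlab] := all_sig lab_spec.
pose v t := iter t (@ordS m.+1) ord0.
pose l t := lab (v t).
have hl : non_backtracking l m.+1.
  move=> t tm; apply/eqP => ell.
  have back : f (v t.+2) = f (v t).
    rewrite [LHS]surjective_pairing [RHS]surjective_pairing.
    congr (_, _); first by rewrite !hfst.
    by rewrite !hlab -/(l t) -/(l t.+1) ell -mulgA s_invol mulg1.
  have vt : v t != v t.+1.
    rewrite -val_eqE !val_iter_ordS !modn_small ?(ltnW tm) //.
    exact/eqP/n_Sn.
  have := hdist _ _ vt; rewrite !k0 /same_item /=.
  by rewrite -[f (ordS (v t.+1))]/(f (v t.+2)) back !eqxx orbT.
have closed : v m.+1 = v 0 by apply: val_inj; rewrite val_iter_ordS modnn.
have := @prod_walk (fun t => (f (v t)).2) l m.+1 (fun t _ => hlab (v t)).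
rewrite closed -{1}[(f (v 0)).2]mulg1 => /mulgI/esym/eqP.
by apply/negP; apply: s_free.
Qed.

Lemma layered_cayley_zrg (c : 'I_z) : is_zrg_mixed_graph layered_cayley z r g.
Proof.
split; first by move=> x; rewrite card_out_arcs card_in_arcs card_edges.
by split; [exact: layered_cayley_has_g_cycle | exact: no_short_cycle].
Qed.

End LayeredCayleyGraph.

Theorem theorem1 (z r g : nat) (hz : 1 <= z) (hr : 1 <= r) (hg : 3 <= g) :
  exists (V : finType) (G : mixed_graph V), is_zrg_mixed_graph G z r g.
Proof.
have free (l : nat -> 'I_r) n : 0 < n < g -> non_backtracking l n ->
    (\prod_(t < n) toggle_perm g (l t) != 1)%g.
  by case/andP=> n0 ng; apply: toggle_perm_free; rewrite n0 ltnW.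
eexists; eexists.
exact: (layered_cayley_zrg (z := z) hg (@toggle_perm_invol g r) free (Ordinal hz)).
Qed.
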